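(* For every natural number $n\ge1$ and every balanced $\mathrm{HS}$ formula $\psi$ over $\{p\}$ with $|\psi|\le n$, $K_n\models_{\mathsf{st}}\psi$ if and only if $M_n\models_{\mathsf{st}}\psi$.
   Context: A Kripke structure over $\{p\}$ is $K=(\{p\},S,\delta,\mu,s_0)$ with states $S$, left-total $\delta\subseteq S\times S$, labelling $\mu:S\to2^{\{p\}}$, initial state $s_0$. A trace is a non-empty finite prefix of an infinite state sequence following $\delta$; initial if it starts at the initial state. For a finite word $w=w(0)\cdots w(n)$, $\mathrm{Pref}(w)=\{w[0,i]\mid0\le i\le n-1\}$, $\mathrm{Suff}(w)=\{w[i,n]\mid1\le i\le n\}$. For $n\ge1$: $S_n=\{s_0,s_1,\dots,s_{2n},t\}$, $\delta_n=\{(s_0,s_0),(s_0,s_1),(s_1,s_2),\dots,(s_{2n-1},s_{2n}),(s_{2n},t),(t,t)\}$, $\mu_n(s_i)=\emptyset$ for $0\le i\le 2n$, $\mu_n(t)=\{p\}$; $K_n=(\{p\},S_n,\delta_n,\mu_n,s_0)$ and $M_n=(\{p\},S_n,\delta_n,\mu_n,s_1)$ (they differ only in the initial state). $\mathrm{HS}$ formulas here are built from $p$, $\neg$, $\wedge$ and the primitive modalities $\langle B\rangle,\langle E\rangle,\langle\bar B\rangle,\langle\bar E\rangle$ (all other $\mathrm{HS}$ modalities being abbreviations); $|\psi|$ is the size of $\psi$ (its number of symbols/subformulas). $\psi$ is balanced if for each subformula $\langle B\rangle\theta$ or $\langle\bar B\rangle\theta$, $\theta$ has the form $\theta_1\wedge\theta_2$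 with $|\theta_1|=|\theta_2|$. State-based semantics over traces of $K$: $\rho\models p$ iff $p\in\mu(s)$ for every state $s$ of $\rho$; $\rho\models\langle B\rangle\psi$ iff some $\rho'\in\mathrm{Pref}(\rho)$ satisfies $\psi$; $\langle E\rangle\psi$: some $\rho'\in\mathrm{Suff}(\rho)$; $\langle\bar B\rangle\psi$: some trace $\rho'$ with $\rho\in\mathrm{Pref}(\rho')$; $\langle\bar E\rangle\psi$: some trace $\rho'$ with $\rho\in\mathrm{Suff}(\rho')$; Booleans as usual. $K\models_{\mathsf{st}}\psi$ iff every initial trace of $K$ satisfies $\psi$. *)

From mathcomp Require Import all_boot.
Set Implicit Arguments. Unset Strict Implicit. Unset Printing Implicit Defensive.

(* A Kripke structure over the single proposition p.
   kmu s = true  iff  p \in mu(s). *)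
Record kripke := Kripke {
  kst : Type;
  kdelta : kst -> kst -> Prop;
  kmu : kst -> bool;
  kinit : kst }.
Arguments kdelta : clear implicits.
Arguments kmu : clear implicits.
Arguments kinit : clear implicits.

Definition left_total (K : kripke) : Prop :=
  forall s : kst K, exists s', kdelta K s s'.

Definition trace (K : kripke) (rho : seq (kst K)) : Prop :=
  0 < size rho /\
  exists f : nat -> kst K,
    (forall i, kdelta K (f i) (f i.+1)) /\ rho = map f (iota 0 (size rho)).

Definition initial_trace (K : kripke) (rho : seq (kst K)) : Prop :=
  trace rho /\ head (kinit K) rho = kinit K.

Definition is_pref (T : Type) (r w : seq T) : Prop :=
  exists i, 0 < i < size w /\ r = take i w.
Definition is_suff (T : Type) (r w : seq T) : Prop :=
  exists i, 0 < i < size w /\ r = drop i w.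

Inductive hs : Type :=
  | HP : hs
  | HNeg : hs -> hs
  | HAnd : hs -> hs -> hs
  | HB : hs -> hs
  | HE : hs -> hs
  | HBbar : hs -> hs
  | HEbar : hs -> hs.

Fixpoint hs_size (f : hs) : nat :=
  match f with
  | HP => 1
  | HNeg g => (hs_size g).+1
  | HAnd g h => (hs_size g + hs_size h).+1
  | HB g | HE g | HBbar g | HEbar g => (hs_size g).+1
  end.

Fixpoint balanced (f : hs) : Prop :=
  match f with
  | HP => True
  | HNeg g => balanced g
  | HAnd g h => balanced g /\ balanced h
  | HE g | HEbar g => balanced g
  | HB g | HBbar g =>
      balanced g /\
      match g with
      | HAnd g1 g2 => hs_size g1 = hs_size g2
      | _ => False
      end
  end.

Fixpoint sat (K : kripke) (rho : seq (kst K)) (f : hs) : Prop :=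
  match f with
  | HP => all (kmu K) rho
  | HNeg g => ~ sat rho g
  | HAnd g h => sat rho g /\ sat rho h
  | HB g => exists r, is_pref r rho /\ sat r g
  | HE g => exists r, is_suff r rho /\ sat r g
  | HBbar g => exists r, trace r /\ is_pref rho r /\ sat r g
  | HEbar g => exists r, trace r /\ is_suff rho r /\ sat r g
  end.

Definition models_st (K : kripke) (f : hs) : Prop :=
  forall rho : seq (kst K), initial_trace rho -> sat rho f.

(* The structures K_n and M_n: states 'I_(2n+2), where i <= 2n is s_i
   and 2n+1 is t. *)
Definition Sn (n : nat) := 'I_(n.*2.+2).

Definition delta_n (n : nat) (x y : Sn n) : Prop :=
  ((x : nat) = 0 /\ (y : nat) = 0) \/
  ((x : nat) <= n.*2 /\ (y : nat) = x.+1) \/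
  ((x : nat) = n.*2.+1 /\ (y : nat) = n.*2.+1).

Definition mu_n (n : nat) (x : Sn n) : bool := (x : nat) == n.*2.+1.

Definition s0 (n : nat) : Sn n := @Ordinal (n.*2.+2) 0 isT.
Definition s1 (n : nat) : Sn n := @Ordinal (n.*2.+2) 1 isT.

Definition K_n (n : nat) : kripke := @Kripke (Sn n) (@delta_n n) (@mu_n n) (s0 n).
Definition M_n (n : nat) : kripke := @Kripke (Sn n) (@delta_n n) (@mu_n n) (s1 n).

(* A trace of K_n (equivalently of M_n: the two differ only in their initial
   state) is a factor of ... 0 0 1 2 ... 2n t t ..., where i stands for s_i.
   It is determined by its shape: either it stays below t and is fixed by its
   length and its last state, or it reaches t and is fixed by the number a of
   states before t and the number m of copies of t.  Call two shapes
   T-equivalent when the two parameters (length and distance from t, resp. a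
   and m) are pairwise equal or both at least T.  Taking a suffix or a left
   extension preserves T-equivalence at level T - 1, resp. T; taking a prefix
   or a right extension only at a level T' with 2T' + 2 <= T <= n, which is
   exactly what the balance condition pays for, since a balanced
   <B>(th1 /\ th2) has size 2|th1| + 2.  So a balanced formula of size at most
   T <= n does not separate T-equivalent shapes, and every trace from s_1 is
   n-equivalent to one from s_0 and conversely. *)

From mathcomp Require Import all_boot zify.
Set Implicit Arguments. Unset Strict Implicit. Unset Printing Implicit Defensive.

Section Chain.
Variable n : nat.

Definition K_from (s : Sn n) : kripke := Kripke (@delta_n n) (@mu_n n) s.

(* Every delta_n-path has the form i |-> min(2n+1, i + c - K) for some c, K; the
   truncated subtraction accounts for the loop at s_0. *)
Definition ramp (c K i : nat) : nat := minn n.*2.+1 (i + c - K).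

Definition ramp_word (c K len : nat) : seq (Sn n) :=
  [seq inord (ramp c K i) | i <- iota 0 len].

Lemma val_inord_ramp c K i : val (inord (ramp c K i) : Sn n) = ramp c K i.
Proof. by rewrite /= inordK // ltnS geq_minl. Qed.

Lemma eq_ramp_word c K c' K' len :
  (forall i, i < len -> ramp c K i = ramp c' K' i) ->
  ramp_word c K len = ramp_word c' K' len.
Proof.
move=> eq_ramp; apply/eq_in_map => i; rewrite mem_iota add0n => /andP[_ lt_i].
by rewrite eq_ramp.
Qed.

Lemma size_ramp_word c K len : size (ramp_word c K len) = len.
Proof. by rewrite size_map size_iota. Qed.

Lemma take_ramp_word c K len i :
  i <= len -> take i (ramp_word c K len) = ramp_word c K i.
Proof. by move=> le_i; rewrite -map_take take_iota (minn_idPl le_i). Qed.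

Lemma drop_ramp_word c K len k :
  drop k (ramp_word c K len) = ramp_word (c + k) K (len - k).
Proof.
rewrite -map_drop drop_iota add0n -{1}(addn0 k) iotaDl -map_comp.
by apply: eq_map => i /=; rewrite /ramp addnA [k + i]addnC addnAC.
Qed.

Lemma nth_ramp_word c K len i x0 :
  i < len -> val (nth x0 (ramp_word c K len) i) = ramp c K i.
Proof.
by move=> lt_i; rewrite (nth_map 0) ?size_iota // nth_iota // val_inord_ramp.
Qed.

Lemma delta_ramp c K i : delta_n (inord (ramp c K i)) (inord (ramp c K i.+1) : Sn n).
Proof. rewrite /delta_n !val_inord_ramp /ramp; lia. Qed.

Lemma ramp_word_trace s c K len : 0 < len -> @trace (K_from s) (ramp_word c K len).
Proof.
move=> len_gt0; split; first by rewrite size_ramp_word.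
exists (fun i => inord (ramp c K i)); split; first exact: delta_ramp.
by rewrite size_ramp_word.
Qed.

Lemma ramp_extend c K L (y : Sn n) :
  delta_n (inord (ramp c K L)) y ->
  exists c' K', (forall i, i <= L -> ramp c' K' i = ramp c K i) /\ (y : nat) = ramp c' K' L.+1.
Proof.
rewrite /delta_n val_inord_ramp /ramp => step; have := ltn_ord y.
case: step => [[x0 y0]|[[xle y1]|[xtop ytop]]].
- by exists c, (L.+1 + c); split=> [i le_iL|]; lia.
- have [x0|xpos] := posnP (minn n.*2.+1 (L + c - K)).
    by exists c, (L + c); split=> [i le_iL|]; lia.
  by exists c, K; split=> [i le_iL|]; lia.
- by exists c, K; split=> [i le_iL|]; lia.
Qed.

Lemma trace_ramp_word s rho :
  @trace (K_from s) rho -> exists c K, rho = ramp_word c K (size rho).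
Proof.
case=> rho_gt0 [f [step def_rho]].
suff ramp_f L : exists c K, forall i, i <= L -> f i = ramp c K i :> nat.
  have [c [K agree]] := ramp_f (size rho).-1; exists c, K.
  rewrite [in LHS]def_rho; apply/eq_in_map => i; rewrite mem_iota add0n => /andP[_ lt_i].
  by apply: val_inj; rewrite /= val_inord_ramp agree // -ltnS prednK.
elim: L => [|L [c [K agree]]].
  exists (f 0), 0 => i; rewrite leqn0 => /eqP->; rewrite /ramp subn0 add0n.
  by apply/esym/minn_idPr; rewrite -ltnS; exact: ltn_ord.
have := step L; rewrite -[f L]inord_val agree // => /ramp_extend[c' [K' [agree' at_next]]].
exists c', K' => i; rewrite leq_eqVlt => /orP[/eqP-> //|]; rewrite ltnS => le_iL.
by rewrite agree' ?agree.
Qed.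

Lemma ramp_word_eq c K len c' K' len' :
  ramp_word c K len = ramp_word c' K' len' ->
  len = len' /\ forall i, i < len -> ramp c K i = ramp c' K' i.
Proof.
move=> eq_words; have eq_len : len = len'.
  by rewrite -(size_ramp_word c K len) eq_words size_ramp_word.
split=> // i lt_i; rewrite -(nth_ramp_word c K ord0 lt_i) eq_words.
by rewrite nth_ramp_word // -eq_len.
Qed.

(* [Climbing L j]: L states of the chain ending at s_j, with j <= 2n;
   [Arrived a m]: a states of the chain followed by m copies of t. *)
Inductive shape := Climbing of nat & nat | Arrived of nat & nat.

Definition shape_size w := match w with Climbing L _ => L | Arrived a m => a + m end.

Definition valid_shape w :=
  match w with Climbing L j => 0 < L /\ j <= n.*2 | Arrived _ m => 0 < m end.

Definition shape_word w :=
  match w with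
  | Climbing L j => ramp_word j.+1 L L
  | Arrived a m => ramp_word n.*2.+1 a (a + m)
  end.

Definition shape_start w :=
  match w with Climbing L j => j.+1 - L | Arrived a _ => n.*2.+1 - a end.

Definition shape_take i w :=
  match w with
  | Climbing L j => Climbing i (j - (L - i))
  | Arrived a m => if a < i then Arrived a (i - a) else Climbing i (n.*2 - (a - i))
  end.

Definition shape_drop k w :=
  match w with
  | Climbing L j => Climbing (L - k) j
  | Arrived a m => Arrived (a - k) (m - (k - a))
  end.

Lemma size_shape_word w : size (shape_word w) = shape_size w.
Proof. by case: w => *; rewrite size_ramp_word. Qed.

Lemma shape_size_gt0 w : valid_shape w -> 0 < shape_size w.
Proof. by case: w => /= *; lia. Qed.

Lemma valid_shape_take w i :
  valid_shape w -> 0 < i < shape_size w -> valid_shape (shape_take i w).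
Proof. by case: w => [L j|a m] /=; try case: ifP => /=; lia. Qed.

Lemma valid_shape_drop w k :
  valid_shape w -> 0 < k < shape_size w -> valid_shape (shape_drop k w).
Proof. by case: w => [L j|a m] /=; lia. Qed.

Lemma take_shape_word w i : valid_shape w -> 0 < i < shape_size w ->
  take i (shape_word w) = shape_word (shape_take i w).
Proof.
case: w => [L j|a m] /= vw lt_i; rewrite take_ramp_word; try lia.
  by apply: eq_ramp_word => k lt_k; rewrite /ramp; lia.
case: ifP => lt_ai /=; last by apply: eq_ramp_word => k lt_k; rewrite /ramp; lia.
by rewrite subnKC 1?ltnW.
Qed.

Lemma drop_shape_word w k : valid_shape w -> 0 < k < shape_size w ->
  drop k (shape_word w) = shape_word (shape_drop k w).
Proof.
case: w => [L j|a m] /= vw lt_k; rewrite drop_ramp_word.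
  by apply: eq_ramp_word => i lt_i; rewrite /ramp; lia.
have -> : a + m - k = a - k + (m - (k - a)) by lia.
by rewrite [RHS]/=; apply: eq_ramp_word => i lt_i; rewrite /ramp; lia.
Qed.

Lemma ramp_word_shape c K len :
  0 < len -> exists2 w, valid_shape w & ramp_word c K len = shape_word w.
Proof.
move=> len_gt0; have [below|reached] := ltnP (ramp c K len.-1) n.*2.+1.
  exists (Climbing len (ramp c K len.-1)); first by rewrite /= -ltnS.
  by rewrite [RHS]/=; apply: eq_ramp_word => i lt_i; move: below; rewrite /ramp; lia.
move: reached; rewrite /ramp => reached.
exists (Arrived (K + n.*2.+1 - c) (len - (K + n.*2.+1 - c))); first by rewrite /=; lia.
rewrite [RHS]/= subnKC; last lia.
by apply: eq_ramp_word => i lt_i; rewrite /ramp; lia.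
Qed.

Lemma trace_shape s rho :
  @trace (K_from s) rho -> exists2 w, valid_shape w & rho = shape_word w.
Proof.
move=> tr_rho; have [c [K ->]] := trace_ramp_word tr_rho.
by apply: ramp_word_shape; case: tr_rho.
Qed.

Lemma shape_word_trace s w : valid_shape w -> @trace (K_from s) (shape_word w).
Proof. by move/shape_size_gt0; case: w => * /=; apply: ramp_word_trace. Qed.

Lemma shape_word_inj w1 w2 : valid_shape w1 -> valid_shape w2 ->
  shape_word w1 = shape_word w2 -> w1 = w2.
Proof.
case: w1 w2 => [L j|a m] [L' j'|a' m'] /= v1 v2 /ramp_word_eq[eq_len agree];
  rewrite /ramp in agree.
- by move: (agree L.-1) => at_end; f_equal; lia.
- by move: (agree L.-1); lia.
- by move: (agree (a + m).-1); lia.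
- by move: (agree a) (agree a') => at_a at_a'; f_equal; lia.
Qed.

Lemma head_shape_word w x : valid_shape w -> val (head x (shape_word w)) = shape_start w.
Proof.
by case: w => [L j|a m] /= vw; rewrite -nth0 nth_ramp_word /ramp; lia.
Qed.

(* Ramps are nondecreasing, so p holds along a ramp iff it holds at its start. *)
Lemma all_mu_ramp_word c K len :
  0 < len -> all (@mu_n n) (ramp_word c K len) = (ramp c K 0 == n.*2.+1).
Proof.
move=> len_gt0; rewrite all_map; apply/allP/eqP => [/(_ 0)|start_t i _].
  by rewrite mem_iota /= /mu_n val_inord_ramp => /(_ len_gt0)/eqP.
by rewrite /= /mu_n val_inord_ramp; apply/eqP; move: start_t; rewrite /ramp; lia.
Qed.

Lemma all_mu_shape_word w :
  valid_shape w -> all (@mu_n n) (shape_word w) = (shape_start w == n.*2.+1).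
Proof.
move=> vw; have := shape_size_gt0 vw.
by case: w vw => [L j|a m] /= vw /all_mu_ramp_word->; rewrite /ramp; congr (_ == _); lia.
Qed.

Fixpoint shape_sat w f : Prop :=
  match f with
  | HP => shape_start w == n.*2.+1
  | HNeg g => ~ shape_sat w g
  | HAnd g h => shape_sat w g /\ shape_sat w h
  | HB g => exists2 i, 0 < i < shape_size w & shape_sat (shape_take i w) g
  | HE g => exists2 k, 0 < k < shape_size w & shape_sat (shape_drop k w) g
  | HBbar g => exists w' i,
      [/\ valid_shape w', 0 < i < shape_size w', shape_take i w' = w & shape_sat w' g]
  | HEbar g => exists w' k,
      [/\ valid_shape w', 0 < k < shape_size w', shape_drop k w' = w & shape_sat w' g]
  end.

Lemma sat_shape_word s f w :
  valid_shape w -> @sat (K_from s) (shape_word w) f <-> shape_sat w f.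
Proof.
elim: f w => [|g IHg|g IHg h IHh|g IHg|g IHg|g IHg|g IHg] w vw /=.
- by rewrite all_mu_shape_word.
- by rewrite IHg.
- by rewrite IHg // IHh.
- split=> [[_ [[i [lt_i ->]] sat_g]]|[i lt_i sat_g]].
    rewrite size_shape_word in lt_i.
    exists i => //; rewrite -IHg -?take_shape_word //; exact: valid_shape_take.
  exists (shape_word (shape_take i w)); rewrite IHg //; last exact: valid_shape_take.
  by split=> //; exists i; rewrite size_shape_word take_shape_word.
- split=> [[_ [[k [lt_k ->]] sat_g]]|[k lt_k sat_g]].
    rewrite size_shape_word in lt_k.
    exists k => //; rewrite -IHg -?drop_shape_word //; exact: valid_shape_drop.
  exists (shape_word (shape_drop k w)); rewrite IHg //; last exact: valid_shape_drop.
  by split=> //; exists k; rewrite size_shape_word drop_shape_word.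
- split=> [[_ [/trace_shape[w' vw' ->] [[i [lt_i def_w]] sat_g]]]
           |[w' [i [vw' lt_i def_w sat_g]]]].
    rewrite size_shape_word in lt_i; rewrite take_shape_word // in def_w.
    exists w', i; split=> //; last by rewrite -IHg.
    by apply/esym/shape_word_inj => //; exact: valid_shape_take.
  exists (shape_word w'); split; first exact: shape_word_trace.
  by split; [exists i; rewrite size_shape_word take_shape_word ?def_w | rewrite IHg].
- split=> [[_ [/trace_shape[w' vw' ->] [[k [lt_k def_w]] sat_g]]]
           |[w' [k [vw' lt_k def_w sat_g]]]].
    rewrite size_shape_word in lt_k; rewrite drop_shape_word // in def_w.
    exists w', k; split=> //; last by rewrite -IHg.
    by apply/esym/shape_word_inj => //; exact: valid_shape_drop.
  exists (shape_word w'); split; first exact: shape_word_trace.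
  by split; [exists k; rewrite size_shape_word drop_shape_word ?def_w | rewrite IHg].
Qed.

Definition eq_upto (T x y : nat) : Prop := x = y \/ T <= x /\ T <= y.

Definition shape_eqv T w1 w2 :=
  match w1, w2 with
  | Climbing L j, Climbing L' j' => eq_upto T L L' /\ eq_upto T (n.*2.+1 - j) (n.*2.+1 - j')
  | Arrived a m, Arrived a' m' => eq_upto T a a' /\ eq_upto T m m'
  | _, _ => False
  end.

Lemma shape_eqv_sym T w1 w2 : shape_eqv T w1 w2 -> shape_eqv T w2 w1.
Proof. by case: w1 w2 => [? ?|? ?] [? ?|? ?] //=; rewrite /eq_upto; lia. Qed.

Lemma shape_eqv_start T w1 w2 : 0 < T -> valid_shape w1 -> shape_eqv T w1 w2 ->
  shape_start w1 == n.*2.+1 -> shape_start w2 == n.*2.+1.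
Proof. by case: w1 w2 => [L j|a m] [L' j'|a' m'] //=; rewrite /eq_upto; lia. Qed.

Lemma shape_eqv_drop T T' w1 w2 k : 0 < T' < T -> shape_eqv T w1 w2 ->
  0 < k < shape_size w1 ->
  exists2 k2, 0 < k2 < shape_size w2 & shape_eqv T' (shape_drop k w1) (shape_drop k2 w2).
Proof.
case: w1 w2 => [L j|a m] [L' j'|a' m'] //=; rewrite /eq_upto => lt_T' eqv lt_k.
  by exists (L' - minn (L - k) T'); lia.
have [lt_ka|le_ak] := ltnP k a.
  by exists (a' - minn (a - k) T'); lia.
by exists (a' + m' - minn (a + m - k) T'); lia.
Qed.

Lemma shape_eqv_take T T' w1 w2 i : 0 < T' -> T'.*2.+2 <= T <= n ->
  valid_shape w1 -> valid_shape w2 -> shape_eqv T w1 w2 -> 0 < i < shape_size w1 ->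
  exists2 i2, 0 < i2 < shape_size w2 & shape_eqv T' (shape_take i w1) (shape_take i2 w2).
Proof.
case: w1 w2 => [L j|a m] [L' j'|a' m'] //=; rewrite /eq_upto => T'_gt0 le_T v1 v2 eqv lt_i.
  have [lt_iT'|le_T'i] := ltnP i T'.
    by exists i; lia.
  by exists (L' - minn (L - i) T'); lia.
have [lt_ai|le_ia] := ltnP a i.
  exists (a' + minn (i - a) T'); first lia.
  rewrite ifT /= /eq_upto; lia.
have [lt_iT'|le_T'i] := ltnP i T'.
  exists i; first lia.
  rewrite ifN /= /eq_upto; lia.
exists (a' - minn (a - i) T'); first lia.
rewrite ifN /= /eq_upto; lia.
Qed.

Lemma shape_eqv_extend_left T w1 w2 w1' k : 0 < T ->
  valid_shape w1' -> valid_shape w2 -> 0 < k < shape_size w1' -> shape_drop k w1' = w1 ->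
  shape_eqv T w1 w2 ->
  exists w2' k2, [/\ valid_shape w2', 0 < k2 < shape_size w2', shape_drop k2 w2' = w2
                   & shape_eqv T w1' w2'].
Proof.
move=> T_gt0 v1' + lt_k <-.
case: w1' v1' lt_k => [L j|a m] /= v1' lt_k.
  all: case: w2 => [L2 j2|a2 m2] //= v2; rewrite /eq_upto => eqv.
  exists (Climbing (L2 + k) j2), k; split=> /=; try lia.
  by rewrite addnK.
exists (Arrived (a2 + minn k a) (m2 + (k - a))), k; split=> /=; try lia.
by congr Arrived; lia.
Qed.

Lemma shape_eqv_extend_right T T' w1 w2 w1' i : 0 < T' -> T'.*2.+2 <= T <= n ->
  valid_shape w1' -> valid_shape w2 -> 0 < i < shape_size w1' -> shape_take i w1' = w1 ->
  shape_eqv T w1 w2 ->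
  exists w2' i2, [/\ valid_shape w2', 0 < i2 < shape_size w2', shape_take i2 w2' = w2
                   & shape_eqv T' w1' w2'].
Proof.
move=> T'_gt0 le_T v1' + lt_i <-; case: w1' v1' lt_i => [L j|a m] /= v1' lt_i.
  case: w2 => [L2 j2|//] /= v2; rewrite /eq_upto => eqv.
  have [near_t|far_t] := ltnP (n.*2.+1 - j) T'.
    exists (Climbing (L2 + (j - j2)) j), L2; split=> /=; try lia.
    by congr Climbing; lia.
  exists (Climbing (L2 + minn (L - i) T') (j2 + minn (L - i) T')), L2; split=> /=; try lia.
  by congr Climbing; lia.
have [lt_ai|le_ia] := ltnP a i.
  case: w2 => [//|a2 m2] /= v2; rewrite /eq_upto => eqv.
  exists (Arrived a2 (m2 + (m - (i - a)))), (a2 + m2); split=> /=; try lia.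
  by rewrite ifT; [congr Arrived|]; lia.
case: w2 => [L2 j2|//] /= v2; rewrite /eq_upto => eqv.
have [j2_0|j2_gt0] := posnP j2.
  exists (Arrived (L2 + maxn (a - i) n.*2) m), L2; split=> /=; try lia.
  by rewrite ifN; [congr Climbing|]; lia.
exists (Arrived (L2 + (n.*2 - j2)) m), L2; split=> /=; try lia.
by rewrite ifN; [congr Climbing|]; lia.
Qed.

Lemma hs_size_gt0 f : 0 < hs_size f.
Proof. by case: f. Qed.

Lemma shape_sat_eqv f T w1 w2 : balanced f -> hs_size f <= T <= n ->
  valid_shape w1 -> valid_shape w2 -> shape_eqv T w1 w2 ->
  shape_sat w1 f -> shape_sat w2 f.
Proof.
have [s] := ubnP (hs_size f); elim: s => // s IH in f T w1 w2 *; rewrite ltnS => size_f.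
case: f size_f => [|g|g h|g|g|g|g] /= size_f.
- by move=> _ le_T v1 _ eqv; apply: (shape_eqv_start _ v1 eqv); lia.
- move=> bal_g le_T v1 v2 eqv nsat1 sat2; apply: nsat1.
  by apply: (IH g _ _ _ _ bal_g _ v2 v1 (shape_eqv_sym eqv) sat2); lia.
- move=> [bal_g bal_h] le_T v1 v2 eqv [sat_g sat_h].
  by split; [apply: (IH g _ _ _ _ bal_g _ v1 v2 eqv sat_g)
            | apply: (IH h _ _ _ _ bal_h _ v1 v2 eqv sat_h)]; lia.
- case: g size_f => [|?|g1 g2|?|?|?|?] /= size_f [bal_g] //.
  case: bal_g => bal1 bal2 eq_size le_T v1 v2 eqv [i lt_i [sat1 sat2]].
  have g1_gt0 := hs_size_gt0 g1.
  have le_T' : (hs_size g1).*2.+2 <= T <= n by lia.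
  have [i2 lt_i2 eqv'] := shape_eqv_take g1_gt0 le_T' v1 v2 eqv lt_i.
  have [v1i v2i] := (valid_shape_take v1 lt_i, valid_shape_take v2 lt_i2).
  by exists i2 => //; split; [apply: (IH g1 _ _ _ _ bal1 _ v1i v2i eqv' sat1)
                            | apply: (IH g2 _ _ _ _ bal2 _ v1i v2i eqv' sat2)]; lia.
- move=> bal_g le_T v1 v2 eqv [k lt_k sat_g].
  have lt_T : 0 < T.-1 < T by have := hs_size_gt0 g; lia.
  have [k2 lt_k2 eqv'] := shape_eqv_drop lt_T eqv lt_k.
  have [v1k v2k] := (valid_shape_drop v1 lt_k, valid_shape_drop v2 lt_k2).
  by exists k2 => //; apply: (IH g _ _ _ _ bal_g _ v1k v2k eqv' sat_g); lia.
- case: g size_f => [|?|g1 g2|?|?|?|?] /= size_f [bal_g] //.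
  case: bal_g => bal1 bal2 eq_size le_T v1 v2 eqv [w1' [i [v1' lt_i def_w1 [sat1 sat2]]]].
  have g1_gt0 := hs_size_gt0 g1.
  have le_T' : (hs_size g1).*2.+2 <= T <= n by lia.
  have [w2' [i2 [v2' lt_i2 def_w2 eqv']]] :=
    shape_eqv_extend_right g1_gt0 le_T' v1' v2 lt_i def_w1 eqv.
  exists w2', i2; split=> //.
  by split; [apply: (IH g1 _ _ _ _ bal1 _ v1' v2' eqv' sat1)
            | apply: (IH g2 _ _ _ _ bal2 _ v1' v2' eqv' sat2)]; lia.
- move=> bal_g le_T v1 v2 eqv [w1' [k [v1' lt_k def_w1 sat_g]]].
  have T_gt0 : 0 < T by lia.
  have [w2' [k2 [v2' lt_k2 def_w2 eqv']]] :=
    shape_eqv_extend_left T_gt0 v1' v2 lt_k def_w1 eqv.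
  by exists w2', k2; split=> //; apply: (IH g _ _ _ _ bal_g _ v1' v2' eqv' sat_g); lia.
Qed.

Lemma models_st_transfer psi (s s' : Sn n) : balanced psi -> hs_size psi <= n ->
  (forall w', valid_shape w' -> shape_start w' = s' ->
     exists2 w, valid_shape w /\ shape_start w = s & shape_eqv n w w') ->
  models_st (K_from s) psi -> models_st (K_from s') psi.
Proof.
move=> bal_psi size_psi start_eqv sat_psi rho [tr_rho head_rho].
have [w' v' def_rho] := trace_shape tr_rho; subst rho.
have [|w [vw start_w] eqv] := start_eqv w' v'.
  by rewrite -(head_shape_word s' v') head_rho.
have init_w : @initial_trace (K_from s) (shape_word w).
  split; first exact: shape_word_trace.
  by apply: val_inj; rewrite /= head_shape_word.
move: (sat_psi _ init_w); rewrite !sat_shape_word // => sat_w.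
by apply: (shape_sat_eqv bal_psi _ vw v' eqv sat_w); rewrite size_psi leqnn.
Qed.

Lemma eqv_shape_from_s0 w' : 0 < n -> valid_shape w' -> shape_start w' = 1 ->
  exists2 w, valid_shape w /\ shape_start w = 0 & shape_eqv n w w'.
Proof.
move=> n_gt0; case: w' => [L j|a m] /= v' start_w'.
  have [le_L|lt_L] := leqP L n.+1.
    by exists (Climbing L L.-1); rewrite /= /eq_upto; lia.
  by exists (Climbing L.+1 L); rewrite /= /eq_upto; lia.
by exists (Arrived n.*2.+1 m); rewrite /= /eq_upto; lia.
Qed.

Lemma eqv_shape_from_s1 w' : 0 < n -> valid_shape w' -> shape_start w' = 0 ->
  exists2 w, valid_shape w /\ shape_start w = 1 & shape_eqv n w w'.
Proof.
move=> n_gt0; case: w' => [L j|a m] /= v' start_w'.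
  by exists (Climbing (minn L (maxn n j)) (minn L (maxn n j))); rewrite /= /eq_upto; lia.
by exists (Arrived n.*2 m); rewrite /= /eq_upto; lia.
Qed.

End Chain.

Theorem lemma5p9 (n : nat) (psi : hs) :
  1 <= n -> balanced psi -> hs_size psi <= n ->
  (models_st (K_n n) psi <-> models_st (M_n n) psi).
Proof.
move=> n_gt0 bal_psi size_psi; split; apply: models_st_transfer => // w'.
  exact: eqv_shape_from_s0.
exact: eqv_shape_from_s1.
Qed.
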